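(* Let $C$ be the Cantor set, $\mathcal{H}$ the algebra of its clopen subsets, $\mathcal{K}$ the family of its compact subsets, and let $\psi_{\mathcal{H}}\colon\mathcal{H}\to\mathbb{R}$ be an increasing submodular setfunction with $\psi_{\mathcal{H}}(\emptyset)=0$. Define $\psi_{\mathcal{K}}\colon\mathcal{K}\to\mathbb{R}$ by $\psi_{\mathcal{K}}(K)=\inf\{\psi_{\mathcal{H}}(H)\colon H\in\mathcal{H},\ K\subseteq H\}$. Then $\psi_{\mathcal{K}}$ is increasing, submodular and continuous from the right.
   Context: A setfunction $\varphi$ on a family $\mathcal{F}$ of sets closed under finite union and intersection is increasing if $X\subseteq Y$ implies $\varphi(X)\le\varphi(Y)$, and submodular if $\varphi(X)+\varphi(Y)\ge\varphi(X\cap Y)+\varphi(X\cup Y)$ for all $X,Y\in\mathcal{F}$. An increasing setfunction $\varphi$ on the compact subsets of a topological space is continuous from the right if for every $\varepsilon>0$ and every compact $K$ there is an open set $U\supseteq K$ such that $\varphi(K')<\varphi(K)+\varepsilon$ for every compact $K'\subseteq U$. *)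

From HB Require Import structures.
From mathcomp Require Import all_boot all_order all_algebra.
From mathcomp Require Import all_classical all_reals topology cantor.
Set Implicit Arguments. Unset Strict Implicit. Unset Printing Implicit Defensive.
Import Order.TTheory GRing.Theory Num.Theory.
Local Open Scope classical_set_scope.
Local Open Scope ring_scope.

(* The Cantor set C is modelled by the Cantor space bool^nat (product
   topology), which is homeomorphic to it.  Set functions are total
   functions on [set T]; the hypotheses only constrain them on the
   relevant family (clopen sets, resp. compact sets). *)

Definition increasing_on {T} {R : realType} (F : set (set T)) (phi : set T -> R) :=
  forall X Y, F X -> F Y -> X `<=` Y -> phi X <= phi Y.

Definition submodular_on {T} {R : realType} (F : set (set T)) (phi : set T -> R) :=
  forall X Y, F X -> F Y -> phi (X `&` Y) + phi (X `|` Y) <= phi X + phi Y.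

Definition right_continuous {T : topologicalType} {R : realType} (phi : set T -> R) :=
  forall (eps : R), 0 < eps -> forall K, compact K ->
    exists U, [/\ open U, K `<=` U &
      forall K', compact K' -> K' `<=` U -> phi K' < phi K + eps].

Definition psiK {R : realType} (psiH : set cantor_space -> R) (K : set cantor_space) : R :=
  inf [set psiH H | H in [set H : set cantor_space | clopen H /\ K `<=` H]].

From HB Require Import structures.
From mathcomp Require Import all_boot all_order all_algebra.
From mathcomp Require Import all_classical all_reals topology cantor.
Import Order.TTheory GRing.Theory Num.Theory.
Local Open Scope classical_set_scope.
Local Open Scope ring_scope.

(* psi_K K is approximated from above by psi_H on a clopen H containing K.
   Monotonicity and submodularity of psi_H then pass to psi_K through such
   approximations, and the clopen approximant H is itself the open
   neighbourhood witnessing continuity from the right. *)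

Section OuterApproximation.
Context {R : realType} {psiH : set cantor_space -> R}.
Hypothesis psiH_increasing : increasing_on (@clopen cantor_space) psiH.
Hypothesis psiH0 : psiH set0 = 0.

Let clopen_bounds (K : set cantor_space) :=
  [set psiH H | H in [set H | clopen H /\ K `<=` H]].

Lemma has_inf_clopen_bounds K : has_inf (clopen_bounds K).
Proof.
split; first by exists (psiH setT), setT; split; [exact: clopenT|].
exists 0 => _ [H [cH _] <-]; rewrite -psiH0.
by apply: psiH_increasing => //; exact: clopen0.
Qed.

Lemma psiK_le_clopen K H : clopen H -> K `<=` H -> psiK psiH K <= psiH H.
Proof. by move=> cH KH; apply: (ge_inf (has_inf_clopen_bounds K).2); exists H. Qed.

Lemma psiK_ge x K : (forall H, clopen H -> K `<=` H -> x <= psiH H) ->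
  x <= psiK psiH K.
Proof.
move=> xle; apply: lb_le_inf; first exact: (has_inf_clopen_bounds K).1.
by move=> _ [H [cH KH] <-]; exact: xle.
Qed.

Lemma psiK_clopen_approx K eps : 0 < eps ->
  exists H, [/\ clopen H, K `<=` H & psiH H < psiK psiH K + eps].
Proof.
move=> eps_gt0.
by have [_ [H [cH KH] <-] ?] := inf_adherent eps_gt0 (has_inf_clopen_bounds K); exists H.
Qed.

Lemma le_psiK X Y : X `<=` Y -> psiK psiH X <= psiK psiH Y.
Proof.
move=> XY; apply: psiK_ge => H cH YH.
by apply: psiK_le_clopen => //; exact: subset_trans YH.
Qed.

Lemma psiK_submodular : submodular_on (@clopen cantor_space) psiH ->
  forall X Y, psiK psiH (X `&` Y) + psiK psiH (X `|` Y) <= psiK psiH X + psiK psiH Y.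
Proof.
move=> psiH_submodular X Y; apply/ler_addgt0Pr => e e_gt0.
have e2_gt0 : 0 < e / 2 by rewrite divr_gt0.
have [H1 [cH1 XH1 H1_lt]] := psiK_clopen_approx X _ e2_gt0.
have [H2 [cH2 YH2 H2_lt]] := psiK_clopen_approx Y _ e2_gt0.
have le_cap := psiK_le_clopen _ _ (clopenI cH1 cH2) (setISS XH1 YH2).
have le_cup := psiK_le_clopen _ _ (clopenU cH1 cH2) (setUSS XH1 YH2).
apply: le_trans (lerD le_cap le_cup) _.
apply: le_trans (psiH_submodular _ _ cH1 cH2) _.
by apply: le_trans (ltW (ltrD H1_lt H2_lt)) _; rewrite addrACA -splitr.
Qed.

Lemma psiK_right_continuous_at K eps : 0 < eps ->
  exists U, [/\ open U, K `<=` U &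
    forall K', K' `<=` U -> psiK psiH K' < psiK psiH K + eps].
Proof.
move=> eps_gt0; have [H [cH KH H_lt]] := psiK_clopen_approx K _ eps_gt0.
exists H; split; [by case: cH | by [] |].
by move=> K' K'H; exact: le_lt_trans (psiK_le_clopen _ _ cH K'H) H_lt.
Qed.

End OuterApproximation.

Theorem lemma3p6 (R : realType) (psiH : set cantor_space -> R) :
  increasing_on (@clopen cantor_space) psiH ->
  submodular_on (@clopen cantor_space) psiH ->
  psiH set0 = 0 ->
  [/\ increasing_on (@compact cantor_space) (psiK psiH),
      submodular_on (@compact cantor_space) (psiK psiH) &
      right_continuous (psiK psiH)].
Proof.
move=> psiH_increasing psiH_submodular psiH0; split.
- by move=> X Y _ _; exact: (le_psiK psiH_increasing psiH0).
- by move=> X Y _ _; exact: (psiK_submodular psiH_increasing psiH0 psiH_submodular).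
- move=> eps eps_gt0 K _.
  have [U [oU KU U_lt]] :=
    psiK_right_continuous_at psiH_increasing psiH0 K _ eps_gt0.
  by exists U; split => // K' _; exact: U_lt.
Qed.
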